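(* For all positive integers $n$ and $w$ with $w \le n$ and all (nonnegative integers) $m \le n$, $$U(n,w,m) \ge \frac{m}{n}\binom{n}{w}.$$
   Context: An $(n,4,w)$ constant-weight code is a set of binary vectors of length $n$ and Hamming weight $w$ any two of which are at Hamming distance at least $4$. $U(n,w,m)$ denotes the largest possible cardinality of a union of $m$ constant-weight codes, each with parameters $(n,4,w)$. *)

From mathcomp Require Import all_boot all_order all_algebra.
Set Implicit Arguments. Unset Strict Implicit. Unset Printing Implicit Defensive.

(* Binary vectors of length n are represented by their supports: {set 'I_n}. *)

Definition hamming (n : nat) (x y : {set 'I_n}) : nat :=
  #|x :\: y| + #|y :\: x|.

Definition hweight (n : nat) (x : {set 'I_n}) : nat := #|x|.

Definition cw_code (n w : nat) (C : {set {set 'I_n}}) : bool :=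
  [forall x in C, hweight x == w] &&
  [forall x in C, forall y in C, (x != y) ==> (4 <= hamming x y)].

Definition U (n w m : nat) : nat :=
  \max_(F : {ffun 'I_m -> {set {set 'I_n}}} | [forall i, cw_code w (F i)])
     #|\bigcup_(i < m) F i|.

From mathcomp Require Import all_boot all_order all_algebra.
Set Implicit Arguments. Unset Strict Implicit. Unset Printing Implicit Defensive.
Import GRing.Theory Num.Theory.

(* Identify the coordinates with Z/nZ and sort the weight-w words by the sum
   of their support.  Two words of equal weight at distance 2 differ by
   trading one coordinate i for another j, which changes the sum by j - i <> 0;
   so each of the n classes is an (n,4,w) code (Graham-Sloane).  For a shift
   a, take the m classes with sums in a + {0,...,m-1}; summing the sizes of
   their unions over all n shifts counts every weight-w word exactly m times,
   so some shift gives a union of at least m/n * C(n,w) words. *)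

Lemma exists_ge_average (T : finType) (t0 : T) (f : T -> nat) :
  exists a, \sum_(t : T) f t <= #|T| * f a.
Proof.
case: (@arg_maxnP _ t0 xpredT f isT) => a _ a_max; exists a.
by rewrite -sum_nat_const leq_sum // => t _; apply: a_max.
Qed.

Lemma sum_card_shifted_preimage (G : finZmodType) (X : finType)
    (s : X -> G) (A : {set X}) (D : {set G}) :
  \sum_(a : G) #|[set x in A | (s x - a)%R \in D]| = #|A| * #|D|.
Proof.
have card_sep (P : pred X) : #|[set x in A | P x]| = \sum_(x in A) P x.
  rewrite -sum1_card big_mkcond [RHS]big_mkcond.
  by apply: eq_bigr => x _; rewrite !inE; case: (x \in A); case: (P x).
have count_shifts x : \sum_(a : G) ((s x - a)%R \in D) = #|D|.
  have shift_inj : injective (fun a : G => s x - a)%R by move=> a b /addrI/oppr_inj.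
  rewrite -(card_preimset D shift_inj) -sum1_card [RHS]big_mkcond.
  by apply: eq_bigr => a _; rewrite !inE.
under eq_bigr => a _ do rewrite card_sep.
rewrite exchange_big /=.
under eq_bigr => x _ do rewrite count_shifts.
by rewrite sum_nat_const.
Qed.

Lemma card_setD_sym (T : finType) (x y : {set T}) :
  #|x| = #|y| -> #|x :\: y| = #|y :\: x|.
Proof. by move=> xy; rewrite !cardsD xy setIC. Qed.

Section SupportSum.

Variable G : finZmodType.

Definition set_sum (x : {set G}) : G := (\sum_(i in x) i)%R.

Lemma set_sumD1 (x : {set G}) (i : G) : i \in x ->
  set_sum x = (set_sum (x :\ i) + i)%R.
Proof.
move=> xi; rewrite /set_sum (bigD1 i) //= addrC; congr (_ + _)%R.
by apply: eq_bigl => j; rewrite !inE andbC.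
Qed.

Lemma card_setD_gt1_eq_set_sum (x y : {set G}) :
  #|x| = #|y| -> x != y -> set_sum x = set_sum y -> 1 < #|y :\: x|.
Proof.
move=> xy neq_xy sum_xy.
have : 0 < #|y :\: x|.
  rewrite card_gt0 setD_eq0; apply: contra neq_xy => sub_yx.
  by rewrite eq_sym eqEcard sub_yx xy leqnn.
rewrite leq_eqVlt => /orP[/eqP/esym y_x1|//].
have /eqP/cards1P[i xy_i] := etrans (card_setD_sym xy) y_x1.
have /eqP/cards1P[j yx_j] := y_x1.
have xy_x : x :&: y = x :\ i by rewrite -xy_i setDDr setDv set0U.
have yx_y : y :&: x = y :\ j by rewrite -yx_j setDDr setDv set0U.
have xi : i \in x by have := set11 i; rewrite -xy_i => /setDP[].
have yj : j \in y by have := set11 j; rewrite -yx_j => /setDP[].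
have sum_x : set_sum x = (set_sum (x :&: y) + i)%R by rewrite (set_sumD1 xi) xy_x.
have sum_y : set_sum y = (set_sum (x :&: y) + j)%R.
  by rewrite (set_sumD1 yj) setIC yx_y.
have eq_ij : i = j by apply: (addrI (set_sum (x :&: y))); rewrite -sum_x -sum_y.
have : i \in x :\: y by rewrite xy_i set11.
by rewrite eq_ij !inE yj.
Qed.

End SupportSum.

Lemma hamming_eq_card (n : nat) (x y : {set 'I_n}) :
  #|x| = #|y| -> hamming x y = (#|y :\: x|).*2.
Proof. by move=> xy; rewrite /hamming card_setD_sym // addnn. Qed.

Section SumClasses.

Variables (n' w : nat).
Local Notation n := n'.+1.

Definition sum_class (k : 'I_n) : {set {set 'I_n}} :=
  [set x : {set 'I_n} | (#|x| == w) && (set_sum x == k)].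

Lemma sum_class_code (k : 'I_n) : cw_code w (sum_class k).
Proof.
apply/andP; split; apply/forall_inP => x; rewrite inE => /andP[/eqP wx /eqP sx] //.
apply/forall_inP => y; rewrite inE => /andP[/eqP wy /eqP sy]; apply/implyP => neq_xy.
have xy : #|x| = #|y| by rewrite wx wy.
rewrite hamming_eq_card // -[4]/(2.*2) leq_double.
by apply: card_setD_gt1_eq_set_sum; rewrite ?sx ?sy.
Qed.

Variables (m : nat) (le_mn : m <= n).

Definition sum_window : {set 'I_n} := [set widen_ord le_mn i | i : 'I_m].

Lemma card_sum_window : #|sum_window| = m.
Proof. rewrite card_imset ?card_ord // => i j /(congr1 val) ij; exact: val_inj. Qed.

Definition shifted_classes (a : 'I_n) : {ffun 'I_m -> {set {set 'I_n}}} :=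
  [ffun i => sum_class (a + widen_ord le_mn i)%R].

Lemma bigcup_shifted_classes (a : 'I_n) :
  \bigcup_(i < m) shifted_classes a i =
  [set x in [set x : {set 'I_n} | #|x| == w] | (set_sum x - a)%R \in sum_window].
Proof.
apply/setP => x; rewrite !inE; apply/bigcupP/andP.
  case=> i _; rewrite ffunE inE => /andP[-> /eqP ->]; split => //.
  by rewrite (addrC a) addrK imset_f.
case=> wx /imsetP[i _ sx]; exists i => //.
by rewrite ffunE inE wx -sx addrC subrK eqxx.
Qed.

Lemma sum_card_shifted_classes :
  \sum_(a : 'I_n) #|\bigcup_(i < m) shifted_classes a i| = 'C(n, w) * m.
Proof.
under eq_bigr => a _ do rewrite bigcup_shifted_classes.
by rewrite sum_card_shifted_preimage card_draws card_ord card_sum_window.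
Qed.

Lemma U_ge_shifted_classes (a : 'I_n) :
  #|\bigcup_(i < m) shifted_classes a i| <= U n w m.
Proof.
apply: (leq_bigmax_cond (shifted_classes a)).
by apply/forallP => i; rewrite ffunE sum_class_code.
Qed.

Lemma binomial_mul_le_U : 'C(n, w) * m <= n * U n w m.
Proof.
have [a avg] := exists_ge_average ord0 (fun a => #|\bigcup_(i < m) shifted_classes a i|).
rewrite -sum_card_shifted_classes (leq_trans avg) // card_ord leq_mul2l.
by rewrite U_ge_shifted_classes orbT.
Qed.

End SumClasses.

Theorem proposition19 (n w m : nat) :
  0 < n -> 0 < w -> w <= n -> m <= n ->
  ((m%:R / n%:R) * ('C(n, w))%:R <= (U n w m)%:R :> rat)%R.
Proof.
case: n => [//|n'] _ _ _ le_mn.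
rewrite mulrAC ler_pdivrMr ?ltr0n // -!natrM ler_nat.
by rewrite mulnC [_ * n'.+1]mulnC binomial_mul_le_U.
Qed.
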